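(* There is a homomorphism from the Grötzsch graph $M(C_5)$ to $S_4$.
   Context: For a graph $G$ and positive integer $r$, the generalized Mycielskian $M_r(G)$ has vertex set $\{(v,i):v\in V(G),0\le i\le r-1\}\cup\{z\}$, with $(u,i)$ adjacent to $(v,j)$ iff $\{u,v\}\in E(G)$ and ($|i-j|=1$ or $i=j=0$), and $z$ adjacent to all $(v,r-1)$, $v\in V(G)$. $M(G)=M_2(G)$; the Grötzsch graph is $M(C_5)$ where $C_5$ is the $5$-cycle. The symmetric shift graph $S_m$ has vertex set $\{(i,j):1\le i,j\le m,\ i\ne j\}$, and $(i,j)$ is adjacent to $(k,\ell)$ iff $j=k$ or $i=\ell$. *)

From mathcomp Require Import all_boot.
Set Implicit Arguments. Unset Strict Implicit. Unset Printing Implicit Defensive.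

(* A graph is a vertex finType together with a (symmetric, irreflexive) adjacency relation. *)

Definition is_hom (V W : finType) (eV : rel V) (eW : rel W) (f : V -> W) : Prop :=
  forall x y, eV x y -> eW (f x) (f y).

Definition cycle_adj (n : nat) : rel 'I_n :=
  fun i j => (j == (i.+1 %% n) :> nat) || (i == (j.+1 %% n) :> nat).

(* Generalized Mycielskian M_r(G): vertex (v,i) is Some (v,i), the apex z is None. *)
Definition myc_vertex (V : finType) (r : nat) : finType := option (V * 'I_r).

Definition myc_adj (V : finType) (e : rel V) (r : nat) : rel (myc_vertex V r) :=
  fun a b =>
    match a, b with
    | Some (u, i), Some (v, j) =>
        e u v && [|| (i.+1 == j :> nat), (j.+1 == i :> nat) |
                     (i == 0 :> nat) && (j == 0 :> nat)]
    | None, Some (_, j) => (j == r.-1 :> nat)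
    | Some (_, i), None => (i == r.-1 :> nat)
    | None, None => false
    end.

(* The Groetzsch graph M(C_5) = M_2(C_5). *)
Definition grotzsch_vertex : finType := myc_vertex 'I_5 2.
Definition grotzsch_adj : rel grotzsch_vertex := @myc_adj _ (@cycle_adj 5) 2.

(* Symmetric shift graph S_m on ordered pairs (i,j) of distinct elements of {0..m-1}
   (indices shifted from {1..m}). *)
Definition shift_vertex (m : nat) : finType := {p : 'I_m * 'I_m | p.1 != p.2}.

Definition shift_adj (m : nat) : rel (shift_vertex m) :=
  fun x y => ((val x).2 == (val y).1) || ((val x).1 == (val y).2).

(** A map from the Mycielskian M(G) is a homomorphism as soon as the first
    layer is a homomorphism of G, each second-layer vertex is sent next to the
    images of the first-layer neighbours of its twin, and all second-layer
    images are adjacent to the image of the apex. For M(C_5) -> S_4 send the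
    apex to (2,0), the first layer around the closed walk
    (0,1) (1,0) (3,1) (2,3) (3,0), and the second layer to pairs starting at 0
    or ending at 2. *)
From mathcomp Require Import all_boot.

Set Implicit Arguments.
Unset Strict Implicit.
Unset Printing Implicit Defensive.

Section MycielskiHom.

Variables (V W : finType) (e : rel V) (eW : rel W).
Hypotheses (e_sym : symmetric e) (eW_sym : symmetric eW).

Definition myc2_map (f0 f1 : V -> W) (a : W) (x : myc_vertex V 2) : W :=
  match x with
  | None => a
  | Some (v, i) => if i == 0 :> nat then f0 v else f1 v
  end.

Lemma myc2_map_hom (f0 f1 : V -> W) (a : W) :
    is_hom e eW f0 ->
    (forall u v, e u v -> eW (f0 u) (f1 v)) ->
    (forall v, eW (f1 v) a) ->
  is_hom (@myc_adj _ e 2) eW (myc2_map f0 f1 a).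
Proof.
move=> hom0 cross apex.
case=> [[u [[|[|?]] ?]]|] [[v [[|[|?]] ?]]|] //=.
- by move=> /andP[/hom0].
- by move=> /andP[/cross].
- by rewrite eW_sym e_sym => /andP[/cross].
- by rewrite andbF.
- by rewrite eW_sym.
Qed.

End MycielskiHom.

Lemma cycle_adj_sym (n : nat) : symmetric (@cycle_adj n).
Proof. by move=> i j; rewrite /cycle_adj orbC. Qed.

Lemma shift_adj_sym (m : nat) : symmetric (@shift_adj m).
Proof. by move=> x y; rewrite /shift_adj orbC; congr (_ || _); apply: eq_sym. Qed.

Definition shift4_pair (a b : nat) (ha : a < 4) (hb : b < 4) (ab : a != b) :
    shift_vertex 4 :=
  exist _ (Ordinal ha, Ordinal hb) ab.

Notation "[ a ~> b ]" := (@shift4_pair a b erefl erefl erefl).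

Definition apex_image : shift_vertex 4 := [2 ~> 0].

Definition layer0_image (v : 'I_5) : shift_vertex 4 :=
  nth apex_image [:: [0 ~> 1]; [1 ~> 0]; [3 ~> 1]; [2 ~> 3]; [3 ~> 0]] v.

Definition layer1_image (v : 'I_5) : shift_vertex 4 :=
  nth apex_image [:: [0 ~> 1]; [1 ~> 2]; [0 ~> 2]; [0 ~> 3]; [1 ~> 2]] v.

Theorem mainTheorem6 :
  exists f : grotzsch_vertex -> shift_vertex 4,
    is_hom grotzsch_adj (@shift_adj 4) f.
Proof.
exists (myc2_map layer0_image layer1_image apex_image).
apply: myc2_map_hom; first exact: cycle_adj_sym; first exact: shift_adj_sym.
- by case=> [[|[|[|[|[|u]]]]] ?] [[|[|[|[|[|v]]]]] ?].
- by case=> [[|[|[|[|[|u]]]]] ?] [[|[|[|[|[|v]]]]] ?].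
- by case=> [[|[|[|[|[|v]]]]] ?].
Qed.
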